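(* Let $\mathcal{G}_1$ and $\mathcal{G}_2$ be reaction networks in $\mathbb{R}^d$. Then $\mathcal{G}_2\sqsubseteq\mathcal{G}_1$ if and only if (i) $\mathcal{SC}_{\mathcal{G}_2}\subset\mathcal{SC}_{\mathcal{G}_1}$, and (ii) for every $\mathbf{s}\in\mathcal{SC}_{\mathcal{G}_1}$, $\mathrm{RelInt}(V^{\mathcal{G}_2}(\mathbf{s}))\subseteq\mathrm{RelInt}(V^{\mathcal{G}_1}(\mathbf{s}))$, where $V^{\mathcal{G}}(\mathbf{s})=\{\mathbf{0}\}$ if $\mathbf{s}\notin\mathcal{SC}_{\mathcal{G}}$.
   Context: A reaction network (E-graph) $\mathcal{G}=(\mathcal{V},\mathcal{E})$ is a finite directed graph whose nodes are distinct elements of a finite set $Y\subset\mathbb{R}^d_{\ge 0}$, with $\mathcal{V}\neq\emptyset$, every node incident to at least one edge, and no edge from a node to itself. For an edge $e$, $\mathbf{s}(e)$ is its source node, $\mathbf{t}(e)$ its target node, and $\mathbf{v}(e)=\mathbf{t}(e)-\mathbf{s}(e)$. Given positive rate constants $\mathcal{K}=(k_e)_{e\in\mathcal{E}}$, $\mathcal{G}$ generates $\mathbf{f}_{\mathcal{G}(\mathcal{K})}(\mathbf{x})=\sum_{e\in\mathcal{E}}k_e\mathbf{x}^{\mathbf{s}(e)}\mathbf{v}(e)$, with $\mathbf{x}^{\mathbf{y}}=\prod_i x_i^{y_i}$, $0^0=1$. We write $\mathcal{G}_2\sqsubseteq\mathcal{G}_1$ if for every choice of positive rate constants $\mathcal{K}_2$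 for $\mathcal{G}_2$ there exist positive rate constants $\mathcal{K}_1$ for $\mathcal{G}_1$ with $\mathbf{f}_{\mathcal{G}_1(\mathcal{K}_1)}(\mathbf{x})=\mathbf{f}_{\mathcal{G}_2(\mathcal{K}_2)}(\mathbf{x})$ for all $\mathbf{x}$. $\mathcal{SC}_{\mathcal{G}}=\{\mathbf{s}(e):e\in\mathcal{E}\}$ is the set of source complexes. For $\mathbf{s}\in\mathcal{SC}_{\mathcal{G}}$, $V^{\mathcal{G}}(\mathbf{s})$ is the cone (set of all nonnegative linear combinations) generated by $\{\mathbf{v}(e):e\in\mathcal{E},\mathbf{s}(e)=\mathbf{s}\}$. $\mathrm{RelInt}(K)$ denotes the interior of a cone $K$ relative to its linear span. *)

From HB Require Import structures.
From mathcomp Require Import all_boot all_order all_algebra.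
From mathcomp Require Import all_classical all_reals all_analysis.
Set Implicit Arguments. Unset Strict Implicit. Unset Printing Implicit Defensive.
Import Order.TTheory GRing.Theory Num.Theory.
Local Open Scope classical_set_scope.
Local Open Scope ring_scope.

Section EGraph.
Variables (R : realType) (d : nat).

Notation vec := 'rV[R]_d.

(* An E-graph is given by its (finite, duplicate-free) list of edges (source, target).
   Its node set is the set of endpoints of the edges, so every node is incident
   to an edge; V nonempty <-> E nonempty. *)
Definition is_egraph (E : seq (vec * vec)) : Prop :=
  [/\ uniq E, E != [::],
      (forall e, e \in E -> e.1 != e.2) &
      (forall e, e \in E -> forall i : 'I_d, 0 <= e.1 ord0 i /\ 0 <= e.2 ord0 i)].

(* monomial x^y = prod_i x_i^{y_i}  (powR has 0^0 = 1) *)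
Definition monomial (x y : vec) : R := \prod_(i < d) powR (x ord0 i) (y ord0 i).

Definition flux (E : seq (vec * vec)) (k : vec * vec -> R) (x : vec) : vec :=
  \sum_(e <- E) (k e * monomial x e.1) *: (e.2 - e.1).

Definition positive_rates (E : seq (vec * vec)) (k : vec * vec -> R) : Prop :=
  forall e, e \in E -> 0 < k e.

(* G2 ⊑ G1 : every dynamical system generated by G2 is generated by G1
   (equality of vector fields on the positive orthant). *)
Definition realizes (E1 E2 : seq (vec * vec)) : Prop :=
  forall k2, positive_rates E2 k2 ->
    exists k1, positive_rates E1 k1 /\
      forall x : vec, (forall i, 0 < x ord0 i) -> flux E1 k1 x = flux E2 k2 x.

Definition source_complexes (E : seq (vec * vec)) : set vec :=
  [set s | s \in [seq e.1 | e <- E]].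

(* V^G(s): cone generated by the reaction vectors with source s
   (= {0} when s is not a source complex) *)
Definition cone_at (E : seq (vec * vec)) (s : vec) : set vec :=
  [set v | exists c : vec * vec -> R, (forall e, 0 <= c e) /\
     v = \sum_(e <- E | e.1 == s) c e *: (e.2 - e.1)].

Definition linspan (S : set vec) : set vec :=
  [set w | exists (n : nat) (a : 'I_n -> R) (u : 'I_n -> vec),
     (forall i, S (u i)) /\ w = \sum_(i < n) a i *: u i].

Definition relint (K : set vec) : set vec :=
  [set v | K v /\ exists2 eps : R, 0 < eps &
     forall w, linspan K w -> (forall i, `|w ord0 i - v ord0 i| < eps) -> K w].

End EGraph.

From HB Require Import structures.
From mathcomp Require Import all_boot all_order all_algebra.
From mathcomp Require Import all_classical all_reals all_analysis.
Import Order.TTheory GRing.Theory Num.Theory.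
Local Open Scope classical_set_scope.
Local Open Scope ring_scope.

(* Grouping the reactions by source complex writes the vector field of G(K) as
   sum_s x^s w_s, where w_s is the sum of k_e v(e) over the reactions with
   source s; distinct monomials are linearly independent on the positive
   orthant (substitute x = exp z and kill one exponential at a time by a
   shift z -> z + h). Hence G2 is realized by G1 exactly when every such w_s
   of G2 is a positive combination of the reaction vectors of G1 at s. The
   positive combinations of finitely many generators form the relative
   interior of the cone they generate: nearby points of the span have nearby
   coefficients (via a pseudo-inverse), and conversely a relative interior
   point can be pushed back a little along the sum of the generators without
   leaving the cone. *)

Lemma big_pred1_seq {T : eqType} {V : nmodType} (r : seq T) (F : T -> V) x :
  uniq r -> x \in r -> \sum_(y <- r | x == y) F y = F x.
Proof.
move=> ur xr; rewrite (big_rem x) //= eqxx big1_seq ?addr0 // => y /andP[/eqP <-].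
by rewrite mem_rem_uniqF.
Qed.

Lemma pinvmx_coef_bound {F : numFieldType} {m n : nat} (A : 'M[F]_(m, n)) :
  exists2 C, 0 < C & forall (u : 'rV_n) eps, 0 <= eps ->
    (forall j, `|u 0 j| <= eps) -> forall i, `|(u *m pinvmx A) 0 i| <= C * eps.
Proof.
pose C := 1 + \sum_j \sum_i `|pinvmx A j i|.
have C_gt0 : 0 < C by rewrite ltr_pwDl // sumr_ge0 // => j _; rewrite sumr_ge0.
exists C => // u eps eps_ge0 u_le i.
rewrite mxE; apply: le_trans (ler_norm_sum _ _ _) _.
apply: (@le_trans _ _ (\sum_j eps * `|pinvmx A j i|)).
  by apply: ler_sum => j _; rewrite normrM ler_wpM2r.
rewrite -mulr_sumr mulrC ler_wpM2r // ler_wpDl //.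
by apply: ler_sum => j _; rewrite (bigD1 i) //= lerDl sumr_ge0.
Qed.

Section ReactionNetworks.
Context {R : realType} {d : nat}.
Notation vec := 'rV[R]_d.
Implicit Types (E : seq (vec * vec)) (k c b : vec * vec -> R) (s v w x y z h : vec).

Definition flux_at E k s : vec := \sum_(e <- E | e.1 == s) k e *: (e.2 - e.1).

Lemma flux_at_ext E c b s :
  {in E, c =1 b} -> flux_at E c s = flux_at E b s.
Proof.
by move=> cb; rewrite /flux_at !(big_seq_cond (fun e => e.1 == s));
  apply: eq_bigr => e /andP[/cb ->].
Qed.

Lemma flux_atD E c b s :
  flux_at E (fun e => c e + b e) s = flux_at E c s + flux_at E b s.
Proof. by rewrite /flux_at -big_split; apply: eq_bigr => e _; rewrite scalerDl. Qed.

Lemma flux_at_const E a s :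
  flux_at E (fun => a) s = a *: flux_at E (fun => 1) s.
Proof. by rewrite /flux_at scaler_sumr; apply: eq_bigr => e _; rewrite scale1r. Qed.

Lemma flux_at_notin E k s : s \notin [seq e.1 | e <- E] -> flux_at E k s = 0.
Proof.
move=> sE; rewrite /flux_at big1_seq // => e /andP[/eqP es eE].
by move: sE; rewrite -es map_f.
Qed.

Lemma flux_by_source E k x {S : seq vec} :
  uniq S -> {subset [seq e.1 | e <- E] <= S} ->
  flux E k x = \sum_(s <- S) monomial x s *: flux_at E k s.
Proof.
move=> uS sourcesS; rewrite /flux /flux_at.
under [RHS]eq_bigr do rewrite scaler_sumr.
rewrite (exchange_big_dep xpredT) //=; apply: eq_big_seq => e eE.
rewrite (big_pred1_seq _ (fun s => monomial x s *: (k e *: (e.2 - e.1)))) //.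
  by rewrite scalerA mulrC.
by apply: sourcesS; exact: map_f.
Qed.

Definition dot y z : R := \sum_i y 0 i * z 0 i.

Lemma dotDr y z w : dot y (z + w) = dot y z + dot y w.
Proof. by rewrite /dot -big_split; apply: eq_bigr => i _; rewrite mxE mulrDr. Qed.

Lemma dotr0 y : dot y 0 = 0.
Proof. by rewrite /dot big1 // => i _; rewrite mxE mulr0. Qed.

Lemma dot_delta y i : dot y (delta_mx 0 i) = y 0 i.
Proof.
rewrite /dot (bigD1 i) //= big1 ?mxE ?eqxx ?mulr1 ?addr0 // => j /negbTE ji.
by rewrite mxE ji mulr0.
Qed.

Lemma monomial_expR y z : monomial (\row_i expR (z 0 i)) y = expR (dot y z).
Proof.
rewrite /monomial /dot (big_morph _ (@expRD R) (@expR0 R)).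
by apply: eq_bigr => i _; rewrite mxE -expRM mulrC.
Qed.

Lemma expR_dot_shift {V : lmodType R} h {y0} {S : seq vec} {a : vec -> V} :
  (forall z, \sum_(y <- y0 :: S) expR (dot y z) *: a y = 0) ->
  forall z, \sum_(y <- S) expR (dot y z) *: ((expR (dot y h) - expR (dot y0 h)) *: a y) = 0.
Proof.
move=> vanish z; have := vanish (z + h); have := vanish z; rewrite !big_cons.
move=> /eqP; rewrite addrC addr_eq0 => /eqP at_z.
move=> /eqP; rewrite addrC addr_eq0 => /eqP at_zh.
under eq_bigr do rewrite scalerA mulrBr -expRD -dotDr scalerBl mulrC -scalerA.
by rewrite sumrB -scaler_sumr at_z at_zh dotDr expRD scalerN scalerA opprK mulrC addNr.
Qed.

Lemma expR_dot_free {V : lmodType R} {S : seq vec} (a : vec -> V) : uniq S ->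
  (forall z, \sum_(y <- S) expR (dot y z) *: a y = 0) -> {in S, forall y, a y = 0}.
Proof.
elim: S a => [//|y0 S IH] a /= /andP[y0S uS] vanish.
have aS : {in S, forall y, a y = 0}.
  move=> y yS; have [i yi] : exists i, y 0 i != y0 0 i.
    apply/existsP; apply: contraNT y0S => /existsPn same.
    suff -> : y0 = y by [].
    by apply/rowP => j; have /negPn/eqP -> := same j.
  have := IH _ uS (expR_dot_shift (delta_mx 0 i) vanish) y yS.
  move/eqP; rewrite scaler_eq0 subr_eq0 !dot_delta => /orP[/eqP/expR_inj/eqP|/eqP//].
  by rewrite (negbTE yi).
move=> y /predU1P[->|]; last exact: aS.
have := vanish 0; rewrite big_cons dotr0 expR0 scale1r big1_seq ?addr0 //.
by move=> w /andP[_ /aS ->]; rewrite scaler0.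
Qed.

Lemma realizesP E1 E2 : realizes E1 E2 <->
  (forall k2, positive_rates E2 k2 -> exists k1, positive_rates E1 k1 /\
    forall s, flux_at E1 k1 s = flux_at E2 k2 s).
Proof.
pose S := undup [seq e.1 | e <- E1 ++ E2].
have uS : uniq S := undup_uniq _.
have S1 : {subset [seq e.1 | e <- E1] <= S}.
  by move=> s; rewrite mem_undup map_cat mem_cat => ->.
have S2 : {subset [seq e.1 | e <- E2] <= S}.
  by move=> s; rewrite mem_undup map_cat mem_cat orbC => ->.
have flux_diff k1 k2 x : flux E1 k1 x - flux E2 k2 x =
    \sum_(s <- S) monomial x s *: (flux_at E1 k1 s - flux_at E2 k2 s).
  rewrite (flux_by_source _ _ _ uS S1) (flux_by_source _ _ _ uS S2) -sumrB.
  by apply: eq_bigr => s _; rewrite scalerBr.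
split=> realize k2 k2_pos; have [k1 [k1_pos same]] := realize k2 k2_pos;
  exists k1; split=> //.
- move=> s; apply/eqP; rewrite -subr_eq0; apply/eqP.
  have [sS|sS] := boolP (s \in S); last first.
    by rewrite !flux_at_notin ?subrr //; apply: contra sS; [exact: S2 | exact: S1].
  apply: (expR_dot_free (fun t => flux_at E1 k1 t - flux_at E2 k2 t) uS _ s sS) => z.
  have expz_pos i : 0 < (\row_i expR (z 0 i) : vec) 0 i by rewrite mxE expR_gt0.
  have /eqP := same _ expz_pos; rewrite -subr_eq0 flux_diff => /eqP vanish.
  by rewrite -[RHS]vanish; apply: eq_bigr => t _; rewrite monomial_expR.
- move=> x _; apply/eqP; rewrite -subr_eq0 flux_diff big1 // => s _.
  by rewrite same subrr scaler0.
Qed.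

Lemma exists_flux_at_neq0 E s : uniq E -> (forall e, e \in E -> e.1 != e.2) ->
  s \in [seq e.1 | e <- E] -> exists k, positive_rates E k /\ flux_at E k s != 0.
Proof.
move=> uE no_loop /mapP[e0 e0E ->].
(* If unit rates give 0, raising the rate of e0 by 1 adds v(e0) != 0. *)
have [flux1|nz] := eqVneq (flux_at E (fun => 1) e0.1) 0; last first.
  by exists (fun => 1); split=> // e _; exact: ltr01.
exists (fun e => 1 + (e == e0)%:R); split; first by move=> e _; rewrite ltr_pwDl.
rewrite flux_atD flux1 add0r /flux_at (big_rem e0) //= !eqxx scale1r big1_seq.
  by rewrite addr0 subr_eq0 eq_sym no_loop.
move=> e /andP[_]; rewrite mem_rem_uniq // inE => /andP[/negbTE -> _].
exact: scale0r.
Qed.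

Lemma glue_rates E (w : vec -> vec) :
  (forall s, exists c, positive_rates E c /\ flux_at E c s = w s) ->
  exists k, positive_rates E k /\ forall s, flux_at E k s = w s.
Proof.
move=> /choice[c c_spec]; exists (fun e => c e.1 e); split.
  by move=> e eE; have [c_pos _] := c_spec e.1; exact: c_pos.
move=> s; have [_ <-] := c_spec s.
by apply: eq_bigr => e /eqP ->.
Qed.

Lemma cone_at_flux_at E s c : {in E, forall e, 0 <= c e} ->
  cone_at E s (flux_at E c s).
Proof.
move=> c_ge0; exists (fun e => `|c e|); split=> //.
by apply: flux_at_ext => e eE; rewrite ger0_norm ?c_ge0.
Qed.

Lemma linspan_lincomb2 (K : set vec) (a1 a2 : R) v w :
  K v -> K w -> linspan K (a1 *: v + a2 *: w).
Proof.
move=> Kv Kw; exists 2, (fun i => if i == 0 then a1 else a2),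
  (fun i => if i == 0 then v else w); split; first by move=> i; case: ifP.
by rewrite !big_ord_recl big_ord0 addr0.
Qed.

Lemma linspan_flux_at E s w :
  linspan (cone_at E s) w -> exists b, w = flux_at E b s.
Proof.
move=> [n [a [u [cone_u ->]]]].
have /choice[c uc] : forall i, exists c, u i = flux_at E c s.
  by move=> i; have [c [_ ->]] := cone_u i; exists c.
exists (fun e => \sum_i a i * c i e); rewrite /flux_at.
under eq_bigr do rewrite uc /flux_at scaler_sumr.
under [RHS]eq_bigr do rewrite scaler_suml.
by rewrite exchange_big; apply: eq_bigr => i _; apply: eq_bigr => e _; rewrite scalerA.
Qed.

Definition reaction_mx E s : 'M[R]_(size E, d) :=
  \matrix_i (if (E`_i).1 == s then (E`_i).2 - (E`_i).1 else 0).

Lemma flux_at_mx E b s : flux_at E b s = (\row_i b E`_i) *m reaction_mx E s.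
Proof.
rewrite mulmx_sum_row /flux_at big_mkcond (big_nth 0) big_mkord.
by apply: eq_bigr => i _; rewrite rowK mxE; case: ifP; rewrite ?scaler0.
Qed.

Lemma flux_at_shift E s c (beta : 'rV_(size E)) : uniq E ->
  flux_at E (fun e => c e + \sum_(i < size E | E`_i == e) beta 0 i) s =
  flux_at E c s + beta *m reaction_mx E s.
Proof.
move=> uE; rewrite flux_atD [in X in _ + X]flux_at_mx; congr (_ + _ *m _).
by apply/rowP => i; rewrite mxE (big_pred1 i) // => j /=; rewrite nth_uniq.
Qed.

Lemma relint_cone_flux_at E s c : uniq E -> positive_rates E c ->
  relint (cone_at E s) (flux_at E c s).
Proof.
move=> uE c_pos; split; first by apply: cone_at_flux_at => e /c_pos/ltW.
have [C C_gt0 coef_bound] := pinvmx_coef_bound (reaction_mx E s).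
pose mu := \big[Order.min/1]_(i < size E) c E`_i.
have mu_gt0 : 0 < mu by apply: lt_bigmin => // i _; apply/c_pos/mem_nth.
have mu_le (i : 'I_(size E)) : mu <= c E`_i := bigmin_le _ _ _.
exists (mu / C); first exact: divr_gt0.
move=> _ /linspan_flux_at [b ->] near_b.
pose u := flux_at E b s - flux_at E c s.
have u_row : (u <= reaction_mx E s)%MS by rewrite /u !flux_at_mx -mulmxBl submxMl.
(* Moving each rate c e by at most mu keeps it nonnegative. *)
have beta_le i : `|(u *m pinvmx (reaction_mx E s)) 0 i| <= mu.
  rewrite -[mu](divfK (lt0r_neq0 C_gt0)) mulrC; apply: coef_bound => [|j].
    exact/ltW/divr_gt0.
  by rewrite !mxE; apply/ltW/near_b.
rewrite -[flux_at E b s](subrK (flux_at E c s)) -/u -(mulmxKpV u_row) addrC.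
rewrite -flux_at_shift //; apply: cone_at_flux_at => _ /(nthP 0)[i iE <-].
rewrite (big_pred1 (Ordinal iE)) => [|j /=]; last by rewrite nth_uniq.
by rewrite -[0](subrr mu) (lerD (mu_le (Ordinal iE))) // lerNnormlW.
Qed.

Lemma relint_cone_pos_rates E s v : relint (cone_at E s) v ->
  exists c, positive_rates E c /\ v = flux_at E c s.
Proof.
move=> [Kv [eps eps_gt0 near_cone]].
pose g := flux_at E (fun => 1) s.
pose t := eps / (1 + \sum_j `|g 0 j|).
have sum_gt0 : 0 < 1 + \sum_j `|g 0 j| by rewrite ltr_pwDl // sumr_ge0.
have t_gt0 : 0 < t by exact: divr_gt0.
have [c [c_ge0 back]] : cone_at E s (v - t *: g).
  apply: near_cone.
    rewrite -scaleNr -[v]scale1r; apply: linspan_lincomb2 => //.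
    by apply: cone_at_flux_at => e _; exact: ler01.
  move=> j; rewrite !mxE addrAC subrr add0r normrN normrM gtr0_norm //.
  rewrite -[eps](divfK (lt0r_neq0 sum_gt0)) -/t ltr_pM2l //.
  by rewrite ltr_pwDl // (bigD1 j) //= lerDl sumr_ge0.
exists (fun e => c e + t); split; first by move=> e _; rewrite ltr_wpDl.
by rewrite flux_atD flux_at_const -[flux_at E c s]back subrK.
Qed.

End ReactionNetworks.

Theorem theorem2 (R : realType) (d : nat) (E1 E2 : seq ('rV[R]_d * 'rV[R]_d)) :
  is_egraph E1 -> is_egraph E2 ->
  (realizes E1 E2 <->
   (source_complexes E2 `<=` source_complexes E1 /\
    forall s, source_complexes E1 s ->
      relint (cone_at E2 s) `<=` relint (cone_at E1 s))).
Proof.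
move=> [uE1 _ _ _] [uE2 _ no_loop2 _]; rewrite realizesP; split.
  move=> realize; split.
    move=> s /= sE2; apply: contraT => sE1.
    have [k2 [k2_pos]] := exists_flux_at_neq0 _ _ uE2 no_loop2 sE2.
    have [k1 [_ <-]] := realize k2 k2_pos.
    by rewrite flux_at_notin ?eqxx.
  move=> s _ v /relint_cone_pos_rates [c [c_pos ->]].
  have [k1 [k1_pos <-]] := realize c c_pos.
  exact: relint_cone_flux_at.
move=> [sources_sub relint_sub] k2 k2_pos; apply: glue_rates => s.
have [sE1|sE1] := boolP (s \in [seq e.1 | e <- E1]).
  have /relint_sub := relint_cone_flux_at _ s _ uE2 k2_pos.
  by move=> /(_ sE1) /relint_cone_pos_rates [c [c_pos ->]]; exists c.
exists (fun => 1); split; first by move=> e _; exact: ltr01.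
by rewrite !flux_at_notin //; apply: contra sE1; exact: sources_sub.
Qed.
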